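(* Let $c$ and $k$ be non-negative integers, let $p$ be a prime, let $G$ be a finitely generated pro-$p$ group of nilpotency class $c$, and let $K=G^{p^k}$. (a) Suppose $p$ is odd and $k-1\geq \log_p(c+1)$. Then $[N,K]\leq N^p$ for every normal subgroup $N$ of $G$; in particular $K$ is powerful. (b) Suppose $p=2$ and $k-2\geq \log_2(c+1)$. Then $[N,K]\leq N^4$ for every normal subgroup $N$ of $G$; in particular $K$ is powerful.
   Context: In pro-$p$ groups, subgroups are closed and generation is topological. For a (pro-)$p$ group $H$, $H^{p^j}$ denotes the (closed) subgroup generated by all $p^j$-th powers of elements of $H$, and $[H,L]$ is the (closed) subgroup generated by commutators $[x,y]=x^{-1}y^{-1}xy$, $x\in H$, $y\in L$. A (pro-)$p$ group $H$ is powerful if $[H,H]\leq H^p$ for $p$ odd, and $[H,H]\leq H^4$ for $p=2$. *)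

From HB Require Import structures.
From mathcomp Require Import all_boot all_order all_algebra.
From mathcomp Require Import all_classical all_reals topology.
Set Implicit Arguments. Unset Strict Implicit. Unset Printing Implicit Defensive.
Local Open Scope classical_set_scope.

Record group_law (T : Type) := GroupLaw {
  gmul : T -> T -> T;
  ginv : T -> T;
  gone : T;
  gmulA : forall x y z, gmul x (gmul y z) = gmul (gmul x y) z;
  gmul1 : forall x, gmul gone x = x;
  gmulV : forall x, gmul (ginv x) x = gone
}.

Section ProP.
Variables (T : topologicalType) (G : group_law T).
Local Notation "x * y" := (gmul G x y).
Local Notation "x ^-1" := (ginv G x).
Local Notation "1" := (gone G).

Fixpoint gexp (x : T) (n : nat) : T := if n is n'.+1 then x * gexp x n' else 1.
Definition gcomm (x y : T) : T := x^-1 * y^-1 * x * y.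

Definition is_subgroup (H : set T) :=
  H 1 /\ (forall x y, H x -> H y -> H (x * y)) /\ (forall x, H x -> H (x^-1)).
Definition is_normal (N : set T) :=
  is_subgroup N /\ (forall x g, N x -> N (g^-1 * x * g)).

Definition topological_group :=
  continuous (fun xy : T * T => xy.1 * xy.2) /\ continuous (fun x : T => x^-1).

(* N has finite index p^e in G (N normal) : a transversal of size p^e *)
Definition index_pow (p : nat) (N : set T) :=
  exists e (f : 'I_(p ^ e) -> T),
    (forall x, exists i, N (x * (f i)^-1)) /\
    (forall i j, N (f i * (f j)^-1) -> i = j).

Definition pro_p_group (p : nat) :=
  topological_group /\ hausdorff_space T /\ compact [set: T] /\
  totally_disconnected [set: T] /\
  (forall N, is_normal N -> open N -> index_pow p N).

Definition gen_closed (S : set T) : set T :=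
  [set x | forall H, is_subgroup H -> closed H -> S `<=` H -> H x].

Definition gpow_sub (H : set T) (n : nat) : set T :=
  gen_closed [set gexp x n | x in H].

Definition gcomm_sub (H L : set T) : set T :=
  gen_closed [set gcomm x y | x in H & y in L].

Definition fin_gen :=
  exists (n : nat) (f : 'I_n -> T), gen_closed (range f) = [set: T].

(* lower central series: lcs 0 = G, lcs (i+1) = [lcs i, G]; i.e. gamma_{i+1} = lcs i *)
Fixpoint lcs (i : nat) : set T :=
  if i is i'.+1 then gcomm_sub (lcs i') [set: T] else [set: T].

Definition nil_class (c : nat) :=
  lcs c = [set 1] /\ (forall d, lcs d = [set 1] -> (c <= d)%N).

Definition powerful (p : nat) (H : set T) :=
  if p == 2 then gcomm_sub H H `<=` gpow_sub H 4
  else gcomm_sub H H `<=` gpow_sub H p.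

End ProP.

From HB Require Import structures.
From mathcomp Require Import all_boot all_order all_algebra.
From mathcomp Require Import all_classical all_reals topology.
From mathcomp Require Import zify.
Set Implicit Arguments. Unset Strict Implicit. Unset Printing Implicit Defensive.
Local Open Scope classical_set_scope.

(* For y in a normal subgroup N and any g, the sequence n |-> [y, g^n] is polynomial in
   Lazard's sense with respect to the filtration F t = N :&: gamma_(t+1)(G): its t-th
   iterated differences lie in F t.  Such sequences are closed under products, inverses,
   conjugation and commutators, and as gamma_(c+1)(G) = 1, Newton interpolation gives
   [y, g^n] = prod_(0 < j < c) w_j ^ C(n, j) with every w_j in N.  For n = p^k and
   0 < j < c <= p^(k-1) the binomial C(p^k, j) is divisible by p (by 4 when p = 2 and
   c <= 2^(k-2)), so [y, g^(p^k)] lies in N^p (resp. N^4).  The g with [N, g] <= N^p form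
   a closed subgroup, which therefore contains K = G^(p^k). *)

Section Subgroups.
Variable G : groupType.
Local Open Scope group_scope.
Implicit Types (x y z g t : G) (S H : set G).

Lemma hall_witt_identity x y z :
  [~ x, y^-1, z] ^ y * [~ y, z^-1, x] ^ z * [~ z, x^-1, y] ^ x = 1.
Proof. by rewrite /commg /conjg !gnorm. Qed.

Lemma commgMr x y z : [~ x, y * z] = [~ x, z] * [~ x, y] ^ z.
Proof. by rewrite /commg /conjg !gnorm. Qed.

Lemma commgVr x y : [~ x, y^-1] = [~ x, y]^-1 ^ y^-1.
Proof. by rewrite /commg /conjg !gnorm. Qed.

Definition subgroup H :=
  H 1 /\ (forall x y, H x -> H y -> H (x * y)) /\ (forall x, H x -> H x^-1).

Definition normal_subgroup H := subgroup H /\ (forall x g, H x -> H (x ^ g)).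

Section SubgroupTheory.
Variable H : set G.
Hypothesis sgH : subgroup H.

Lemma group1 : H 1. Proof. by case: sgH. Qed.
Lemma groupM x y : H x -> H y -> H (x * y). Proof. by case: sgH => _ [sM _]; apply: sM. Qed.
Lemma groupV x : H x -> H x^-1. Proof. by case: sgH => _ [_ sV]; apply: sV. Qed.
Lemma groupX x n : H x -> H (x ^+ n).
Proof. by move=> Hx; elim: n => [|n IHn]; [apply: group1 | rewrite expgS; apply: groupM]. Qed.

End SubgroupTheory.

Section NormalTheory.
Variable N : set G.
Hypothesis nN : normal_subgroup N.

Lemma normal_subgroupW : subgroup N. Proof. by case: nN. Qed.
Lemma normalJ x g : N x -> N (x ^ g). Proof. by case: nN => _; apply. Qed.
Lemma normal_comml x y : N x -> N [~ x, y].
Proof.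
have sN := normal_subgroupW.
by move=> Nx; rewrite commgEl; apply: groupM sN _ _ (groupV sN Nx) (normalJ _ Nx).
Qed.

End NormalTheory.

Lemma normal_setT : normal_subgroup [set: G].
Proof. by do 2?split. Qed.

Lemma subgroupI H K : subgroup H -> subgroup K -> subgroup (H `&` K).
Proof.
move=> sH sK; split; first by split; apply: group1.
by split=> [x y [? ?] [? ?]|x [? ?]]; split; apply: groupM || apply: groupV.
Qed.

Lemma normalI H K : normal_subgroup H -> normal_subgroup K -> normal_subgroup (H `&` K).
Proof.
move=> nH nK; split; first by apply: subgroupI; apply: normal_subgroupW.
by move=> x g [? ?]; split; apply: normalJ.
Qed.

Definition generated S : set G := [set x | forall H, subgroup H -> S `<=` H -> H x].

Lemma subgroup_generated S : subgroup (generated S).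
Proof.
split; first by move=> H sH _; apply: group1.
split=> [x y Sx Sy|x Sx] H sH SH; first by apply: groupM (Sx _ sH SH) (Sy _ sH SH).
exact: groupV (Sx _ sH SH).
Qed.

Lemma sub_generated S : S `<=` generated S.
Proof. by move=> x Sx H _; apply. Qed.

Lemma generated_min S H : subgroup H -> S `<=` H -> generated S `<=` H.
Proof. by move=> sH SH x; apply. Qed.

Lemma subgroup_conj_preimage H g : subgroup H -> subgroup [set x | H (x ^ g)].
Proof.
move=> sH; split; first by rewrite /= conj1g; apply: group1 sH.
split=> [x y Hx Hy|x Hx]; rewrite /= ?conjMg ?conjVg; first exact: groupM sH _ _ Hx Hy.
exact: groupV sH _ Hx.
Qed.

Lemma normal_generated S : (forall x g, S x -> S (x ^ g)) -> normal_subgroup (generated S).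
Proof.
move=> SJ; split=> [|x g]; first exact: subgroup_generated.
have sgSg := subgroup_conj_preimage g (subgroup_generated S).
have SSg : S `<=` [set y | generated S (y ^ g)].
  by move=> y Sy; exact: sub_generated (SJ _ _ Sy).
exact: generated_min sgSg SSg x.
Qed.

Definition cent_mod (X A : set G) : set G := [set y | forall x, A x -> X [~ x, y]].

Lemma subgroup_cent_mod X A : normal_subgroup X -> subgroup (cent_mod X A).
Proof.
move=> nX; have sX := normal_subgroupW nX.
split=> [x _|]; first by rewrite commg1; exact: group1 sX.
split=> [y z Ay Az x Ax|y Ay x Ax].
  by rewrite commgMr; exact: groupM sX _ _ (Az _ Ax) (normalJ nX _ (Ay _ Ax)).
by rewrite commgVr; exact: (normalJ nX _ (groupV sX (Ay _ Ax))).
Qed.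

(* [lower_central l] is gamma_(l+1)(G), with the same indexing as [lcs]. *)
Fixpoint lower_central (l : nat) : set G :=
  if l is l'.+1 then generated [set [~ x, t] | x in lower_central l' & t in [set: G]]
  else [set: G].

Lemma normal_lower_central l : normal_subgroup (lower_central l).
Proof.
elim: l => [|l IHl] /=; first exact: normal_setT.
apply: normal_generated => _ g [x lx [t _ <-]].
by rewrite conjRg; exists (x ^ g); [apply: normalJ | exists (t ^ g)].
Qed.

Lemma mem_commg_lower_central l x t : lower_central l x -> lower_central l.+1 [~ x, t].
Proof. by move=> lx; apply: sub_generated; exists x => //; exists t. Qed.

Lemma lower_centralS l : lower_central l.+1 `<=` lower_central l.
Proof.
apply: generated_min; first exact/normal_subgroupW/normal_lower_central.
by move=> _ [x lx [t _ <-]]; apply: normal_comml (normal_lower_central l) _ _ lx.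
Qed.

Lemma three_subgroup a b x y :
  lower_central a x -> lower_central b y -> lower_central (a + b).+1 [~ x, y].
Proof.
elim: b a x y => [|b IHb] a x y ax ly; first by rewrite addn0; apply: mem_commg_lower_central.
set X := lower_central (a + b.+1).+1; have nX : normal_subgroup X := normal_lower_central _.
have sX := normal_subgroupW nX; have sl := fun l => normal_subgroupW (normal_lower_central l).
suff: lower_central b.+1 `<=` cent_mod X (lower_central a) by move=> /(_ y ly); apply.
apply: (generated_min (subgroup_cent_mod _ nX)) => _ [u bu [t _ <-]] {}x {}ax.
(* By Hall-Witt, [u, t, x] ^ t^-1 is the inverse of a product of two elements of X. *)
have hw := hall_witt_identity u t^-1 x; rewrite invgK -mulgA in hw.
have XB : X ([~ t^-1, x^-1, u] ^ x).
  apply: (normalJ nX); rewrite /X -addSnnS; apply: IHb bu.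
  rewrite -invgR; apply: (groupV (sl _)); apply: mem_commg_lower_central.
  exact: (groupV (sl _) ax).
have XC : X ([~ x, u^-1, t^-1] ^ u).
  apply: (normalJ nX); rewrite /X addnS; apply: mem_commg_lower_central.
  exact: (IHb _ _ _ ax (groupV (sl _) bu)).
have XA : X ([~ u, t, x] ^ t^-1).
  by rewrite -[_ ^ t^-1]invgK (mulg1_eq hw); apply: (groupV sX); apply: (groupM sX).
by rewrite -invgR -(conjgKV t [~ u, t, x]); apply: (groupV sX); apply: (normalJ nX).
Qed.

End Subgroups.

Arguments normal_setT {G}.
Arguments normal_lower_central {G} l.

Section Differences.
Variable G : groupType.
Local Open Scope group_scope.
Implicit Types f g : nat -> G.

Definition fdiff f n := (f n)^-1 * f n.+1.

Definition diffn i f := iter i fdiff f.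

Lemma fdiffV f n : fdiff (fun n => (f n)^-1) n = (fdiff f n)^-1 ^ (f n)^-1.
Proof. by rewrite /fdiff /conjg !gnorm. Qed.

Lemma fdiffM f g n : fdiff (fun n => f n * g n) n = fdiff f n ^ g n * fdiff g n.
Proof. by rewrite /fdiff /conjg !gnorm. Qed.

Lemma fdiffJ f g n :
  fdiff (fun n => f n ^ g n) n = [~ f n ^ g n, fdiff g n] * (fdiff f n ^ g n) ^ fdiff g n.
Proof. by rewrite /fdiff /commg /conjg !gnorm. Qed.

Lemma fdiffR f g n :
  fdiff (fun n => [~ f n, g n]) n =
  ([~ f n, fdiff g n] ^ fdiff f n) ^ [~ f n, g n] *
  [~ [~ f n, g n], fdiff g n * fdiff f n] * [~ fdiff f n, g n.+1].
Proof. by rewrite /fdiff /commg /conjg !gnorm. Qed.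

Lemma fdiff_eq1 f : (forall n, fdiff f n = 1) -> f 0 = 1 -> forall n, f n = 1.
Proof.
move=> df f0; elim=> // n IHn.
by rewrite -(mulVKg (f n) (f n.+1)) -/(fdiff f n) df IHn !gnorm.
Qed.

Lemma fdiff_expg_bin (v : G) m n :
  fdiff (fun n => v ^+ 'C(n, m.+1)) n = v ^+ 'C(n, m).
Proof. by rewrite /fdiff binS expgnDr mulKg. Qed.

Lemma diffn_mulr i k f g c : (forall n, k <= n < k + i -> f n = g n) ->
  f (k + i) = g (k + i) * c -> diffn i f k = diffn i g k * c.
Proof.
elim: i k f g => [|i IHi] k f g fg fgc; first by move: fgc; rewrite addn0.
rewrite /diffn !iterSr; apply: IHi => [n /andP [kn ni]|].
  by rewrite /fdiff !fg //; apply/andP; split; lia.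
by rewrite /fdiff -addnS fgc fg ?mulgA //; apply/andP; split; lia.
Qed.

Lemma eq_diffn i k f g : (forall n, k <= n <= k + i -> f n = g n) -> diffn i f k = diffn i g k.
Proof.
move=> fg; rewrite -[diffn i g k]mulg1; apply: diffn_mulr; last by rewrite mulg1 fg // leq_addr /=.
by move=> n /andP [kn ni]; rewrite fg // kn ltnW.
Qed.

Fixpoint binomial_prod (w : nat -> G) m n : G :=
  if m is m'.+1 then w m ^+ 'C(n, m) * binomial_prod w m' n else 1.

Lemma eq_binomial_prod w w' m n :
  (forall i, i <= m -> w i = w' i) -> binomial_prod w m n = binomial_prod w' m n.
Proof. by elim: m => [|m IHm] //= ww'; rewrite ww' // IHm // => i /leqW; apply: ww'. Qed.

Lemma mem_binomial_prod (H : set G) w m n : subgroup H ->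
  (forall i, 0 < i <= m -> H (w i ^+ 'C(n, i))) -> H (binomial_prod w m n).
Proof.
move=> sH Hw; elim: m Hw => [|m IHm] Hw /=; first exact: group1 sH.
apply: (groupM sH); first by apply: Hw; rewrite leqnn.
by apply: IHm => i /andP [i0 im]; apply: Hw; rewrite i0 leqW.
Qed.

End Differences.

Section Lazard.
Variable G : groupType.
Local Open Scope group_scope.
Implicit Types f g : nat -> G.

Variable F : nat -> set G.
Hypothesis normal_F : forall t, normal_subgroup (F t).
Hypothesis F_decr : forall t, F t.+1 `<=` F t.
Hypothesis F_comm : forall t s x y, F t x -> F s y -> F (t + s) [~ x, y].

Let subgroup_F t : subgroup (F t) := normal_subgroupW (normal_F t).

Lemma F_le t t' : t <= t' -> F t' `<=` F t.
Proof.
by move=> /subnK <-; elim: (t' - t) => [|d IHd] x //; rewrite addSn => /F_decr /IHd.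
Qed.

Fixpoint wpoly r t f : Prop :=
  (forall n, F t (f n)) /\ (if r is r'.+1 then wpoly r' t.+1 (fdiff f) else True).

Lemma wpoly_le r t t' f : t <= t' -> wpoly r t' f -> wpoly r t f.
Proof.
elim: r t t' f => [|r IHr] t t' f tt' [fF df]; first by split=> // n; apply: F_le tt' _ (fF n).
by split=> [n|]; [apply: F_le tt' _ (fF n) | apply: IHr _ _ _ _ df].
Qed.

Lemma wpoly_pred r t f : wpoly r.+1 t f -> wpoly r t f.
Proof. by elim: r t f => [|r IHr] t f [fF df]; split=> //; apply: IHr. Qed.

Lemma wpoly_shift r t f : wpoly r t f -> wpoly r t (fun n => f n.+1).
Proof. by elim: r t f => [|r IHr] t f [fF df]; split=> //; exact: IHr _ _ df. Qed.

Section ClosureStep.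
Variable r : nat.
Hypothesis wV : forall {t f}, wpoly r t f -> wpoly r t (fun n => (f n)^-1).
Hypothesis wM : forall {t f g}, wpoly r t f -> wpoly r t g -> wpoly r t (fun n => f n * g n).
Hypothesis wJ : forall {t f g}, wpoly r t f -> wpoly r 0 g -> wpoly r t (fun n => f n ^ g n).
Hypothesis wR : forall {t s f g},
  wpoly r t f -> wpoly r s g -> wpoly r (t + s) (fun n => [~ f n, g n]).

Lemma wpolyV_step t f : wpoly r.+1 t f -> wpoly r.+1 t (fun n => (f n)^-1).
Proof.
move=> wf; have [fF df] := wf; split=> [n|]; first exact: groupV (fF n).
rewrite (funext (fdiffV f)); apply: wJ (wV df) _.
exact: wpoly_le (leq0n t) (wV (wpoly_pred wf)).
Qed.

Lemma wpolyM_step t f g : wpoly r.+1 t f -> wpoly r.+1 t g -> wpoly r.+1 t (fun n => f n * g n).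
Proof.
move=> wf wg; have [fF df] := wf; have [gF dg] := wg.
split=> [n|]; first exact: groupM (fF n) (gF n).
rewrite (funext (fdiffM f g)); apply: wM (wJ df _) dg.
exact: wpoly_le (leq0n t) (wpoly_pred wg).
Qed.

Lemma wpolyJ_step t f g : wpoly r.+1 t f -> wpoly r.+1 0 g -> wpoly r.+1 t (fun n => f n ^ g n).
Proof.
move=> wf wg; have [fF df] := wf; have [gF dg] := wg.
split=> [n|]; first exact: normalJ (fF n).
rewrite (funext (fdiffJ f g)); apply: wM.
  by rewrite -addn1; apply: wR (wJ (wpoly_pred wf) (wpoly_pred wg)) dg.
exact: wJ (wJ df (wpoly_pred wg)) (wpoly_le (leq0n 1) dg).
Qed.

Lemma wpolyR_step t s f g :
  wpoly r.+1 t f -> wpoly r.+1 s g -> wpoly r.+1 (t + s) (fun n => [~ f n, g n]).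
Proof.
move=> wf wg; have [fF df] := wf; have [gF dg] := wg.
have wf' := wpoly_pred wf; have wg' := wpoly_pred wg; have wfg := wR wf' wg'.
split=> [n|]; first exact: F_comm (fF n) (gF n).
rewrite (funext (fdiffR f g)); apply: wM; first apply: wM.
- apply: wJ (wpoly_le (leq0n _) wfg); apply: wJ (wpoly_le (leq0n _) df).
  by rewrite -addnS; apply: wR wf' dg.
- by rewrite -addn1; apply: wR wfg (wM (wpoly_le _ dg) (wpoly_le _ df)).
- by rewrite -addSn; apply: wR df (wpoly_shift wg').
Qed.

End ClosureStep.

Lemma wpoly_closure r :
  [/\ forall t f, wpoly r t f -> wpoly r t (fun n => (f n)^-1),
      forall t f g, wpoly r t f -> wpoly r t g -> wpoly r t (fun n => f n * g n),
      forall t f g, wpoly r t f -> wpoly r 0 g -> wpoly r t (fun n => f n ^ g n) &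
      forall t s f g, wpoly r t f -> wpoly r s g -> wpoly r (t + s) (fun n => [~ f n, g n])].
Proof.
elim: r => [|r [wV wM wJ wR]]; last first.
  split=> *; [exact: wpolyV_step | exact: wpolyM_step | exact: wpolyJ_step | exact: wpolyR_step].
split=> [t f [fF _]|t f g [fF _] [gF _]|t f g [fF _] _|t s f g [fF _] [gF _]]; split=> // n.
- exact: groupV (fF n).
- exact: groupM (fF n) (gF n).
- exact: normalJ (fF n).
- exact: F_comm (fF n) (gF n).
Qed.

Lemma wpolyM r t f g : wpoly r t f -> wpoly r t g -> wpoly r t (fun n => f n * g n).
Proof. by case: (wpoly_closure r) => _ wM _ _; apply: wM. Qed.

Definition poly_seq f := forall r, wpoly r 0 f.

Lemma wpoly_diffn i r t f n : i <= r -> wpoly r t f -> F (t + i) (diffn i f n).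
Proof.
elim: i r t f => [|i IHi] [|r] t f // ir [fF df]; rewrite ?addn0 //.
by rewrite /diffn iterSr addnS -addSn; apply: IHi ir df.
Qed.

Lemma poly_seq_diffn i f n : poly_seq f -> F i (diffn i f n).
Proof. by move=> pf; rewrite -[i]add0n; apply: wpoly_diffn (pf i). Qed.

Lemma wpoly1 r t : wpoly r t (fun=> 1).
Proof.
elim: r t => [|r IHr] t; split=> //; try by move=> n; apply: (group1 (subgroup_F _)).
by rewrite (_ : fdiff _ = fun=> 1) //; apply: funext => n; rewrite /fdiff mulg1 invg1.
Qed.

Lemma wpoly_expg_bin r m t v : F (t + m) v -> wpoly r t (fun n => v ^+ 'C(n, m)).
Proof.
elim: r m t => [|r IHr] m t Fv; split=> //;
  try by move=> n; apply/(groupX (subgroup_F _))/(F_le (leq_addr m t) Fv).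
case: m Fv => [|m] Fv; last by rewrite (funext (fdiff_expg_bin v m)); apply: IHr; rewrite addSnnS.
rewrite (_ : fdiff _ = fun=> 1); first exact: wpoly1.
by apply: funext => n; rewrite /fdiff !bin0 mulVg.
Qed.

Lemma poly_seq_eq1 D f : (forall x, F D x -> x = 1) -> poly_seq f ->
  (forall i, i < D -> diffn i f 0 = 1) -> forall n, f n = 1.
Proof.
move=> FD1 pf f0.
suff: forall j, j <= D -> forall n, diffn (D - j) f n = 1 by move/(_ D (leqnn D)); rewrite subnn.
elim=> [_ n|j IHj jD]; first by rewrite subn0; apply/FD1/poly_seq_diffn.
have DjS : D - j = (D - j.+1).+1 by lia.
apply: fdiff_eq1 => [n|]; last by apply: f0; lia.
by have := IHj (ltnW jD) n; rewrite DjS.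
Qed.

Lemma poly_seq_expansion_upto s m : poly_seq s -> s 0 = 1 ->
  exists f w, [/\ poly_seq f, forall i, i <= m -> diffn i f 0 = 1,
    forall j, F j (w j) & forall n, s n = f n * binomial_prod w m n].
Proof.
move=> ps s0; elim: m => [|m [f [w [pf f0 Fw sfw]]]].
  exists s, (fun=> 1); split=> //; first by case.
    by move=> j; apply: (group1 (subgroup_F _)).
  by move=> n; rewrite mulg1.
set v := diffn m.+1 f 0; have Fv : F m.+1 v := poly_seq_diffn _ _ pf.
(* This leaves f unchanged on [0, m] and cancels its (m+1)-st difference at 0. *)
set f' := fun n => f n * v^-1 ^+ 'C(n, m.+1).
have f'f n : n <= m -> f' n = f n by move=> nm; rewrite /f' bin_small // mulg1.
exists f', (fun i => if i == m.+1 then v else w i); split.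
- move=> r; apply: wpolyM (pf r) _; apply: wpoly_expg_bin.
  exact: (groupV (subgroup_F _) Fv).
- move=> i; rewrite leq_eqVlt => /predU1P [->|im].
    by rewrite (@diffn_mulr _ _ _ _ f v^-1) -/v ?mulgV // /f' add0n binn.
  rewrite (@eq_diffn _ _ _ f' f) ?f0 //.
  by move=> n /andP [_ ni]; rewrite f'f // (leq_trans ni).
- by move=> j; case: eqP => [->|].
move=> n; rewrite sfw /= eqxx /f' -mulgA expVgn mulKg; congr (_ * _).
by apply: eq_binomial_prod => i im; case: eqP im => // ->; rewrite ltnn.
Qed.

Lemma poly_seq_expansion D s : (forall x, F D x -> x = 1) -> poly_seq s -> s 0 = 1 ->
  exists2 w, forall j, F j (w j) & forall n, s n = binomial_prod w D.-1 n.
Proof.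
move=> FD1 ps s0; have [f [w [pf f0 Fw sfw]]] := poly_seq_expansion_upto D.-1 ps s0.
exists w => // n; rewrite sfw (poly_seq_eq1 FD1 pf) ?mul1g // => i iD.
by apply: f0; lia.
Qed.

End Lazard.

Section CommutatorExpansion.
Variable G : groupType.
Local Open Scope group_scope.
Variable N : set G.
Hypothesis nN : normal_subgroup N.

Let F t := N `&` lower_central t.

Let normal_F t : normal_subgroup (F t) := normalI nN (normal_lower_central t).

Let F_decr t : F t.+1 `<=` F t.
Proof. by move=> x [Nx lx]; split=> //; apply: lower_centralS. Qed.

Let F_comm t s x y : F t x -> F s y -> F (t + s) [~ x, y].
Proof.
move=> [Nx lx] [_ ly]; split; first exact: normal_comml nN _ _ Nx.
exact: lower_centralS (three_subgroup lx ly).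
Qed.

Lemma wpoly_conj_expg r t g v : F t v -> wpoly F r t (fun n => v ^ (g ^+ n)).
Proof.
elim: r t v => [|r IHr] t v Fv; split=> //; try by move=> n; apply: normalJ (normal_F t) _ _ Fv.
have -> : fdiff (fun n => v ^ (g ^+ n)) = fun n => [~ v, g] ^ (g ^+ n).
  by apply: funext => n; rewrite /fdiff expgS conjgM -conjVg -conjMg.
apply: IHr; case: Fv => Nv lv; split; [exact: normal_comml | exact: mem_commg_lower_central].
Qed.

Lemma poly_seq_commg_expg y g : N y -> poly_seq F (fun n => [~ y, g ^+ n]).
Proof.
move=> Ny [|r]; split=> //; try by move=> n; split; first exact: normal_comml nN _ _ Ny.
have -> : fdiff (fun n => [~ y, g ^+ n]) = fun n => [~ y, g] ^ (g ^+ n).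
  by apply: funext => n; rewrite /fdiff /commg /conjg expgS !gnorm.
by apply: wpoly_conj_expg; split; [exact: normal_comml | exact: mem_commg_lower_central].
Qed.

Lemma commg_expg_expansion c y g : @lower_central G c `<=` [set 1] -> N y ->
  exists2 w, forall j, N (w j) & forall n, [~ y, g ^+ n] = binomial_prod w c.-1 n.
Proof.
move=> lc1 Ny; have FD1 x : F c x -> x = 1 by case=> _ /lc1.
have sg := poly_seq_commg_expg g Ny.
have [w Fw sw] := poly_seq_expansion normal_F F_decr F_comm FD1 sg (commg1 y).
by exists w => // j; case: (Fw j).
Qed.

Lemma commg_expg_mem_pow c q n y g : @lower_central G c `<=` [set 1] ->
  (forall j, 0 < j < c -> q %| 'C(n, j)) -> N y -> generated [set x ^+ q | x in N] [~ y, g ^+ n].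
Proof.
move=> lc1 qC Ny; have [w Nw ->] := commg_expg_expansion g lc1 Ny.
apply: mem_binomial_prod (subgroup_generated _) _ => i /andP [i0 ic].
have /dvdnP [k ->] : q %| 'C(n, i) by apply: qC; lia.
rewrite expgnA; apply: sub_generated; exists (w i ^+ k) => //.
exact: (groupX (normal_subgroupW nN) _ (Nw i)).
Qed.

End CommutatorExpansion.

Lemma dvdn_bin_pexp p a k j : prime p -> a <= k -> 0 < j < p ^ a -> p ^ (k - a).+1 %| 'C(p ^ k, j).
Proof.
move=> pp ak /andP [j0 jpa]; have p1 := prime_gt1 pp.
have pk0 : 0 < p ^ k by rewrite expn_gt0 ltnW.
have jpk : j <= p ^ k by apply: leq_trans (ltnW jpa) (leq_pexp2l (ltnW p1) ak).
case: j j0 jpa jpk => // i _ ipa ipk.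
have C0 : 0 < 'C(p ^ k, i.+1) by rewrite bin_gt0.
have C'0 : 0 < 'C((p ^ k).-1, i) by rewrite bin_gt0 -ltnS prednK.
have logC : logn p (i.+1 * 'C(p ^ k, i.+1)) = k + logn p 'C((p ^ k).-1, i).
  by rewrite -mul_bin_diag lognM // pfactorK.
rewrite lognM // in logC.
have logi : logn p i.+1 < a.
  rewrite -(ltn_exp2l _ _ p1); apply: leq_ltn_trans ipa.
  exact: dvdn_leq (ltn0Sn _) (pfactor_dvdnn p i.+1).
rewrite pfactor_dvdn //; lia.
Qed.

Definition group_of_law (T : choiceType) (G : group_law T) : Type := T.

Section GroupLawAxioms.
Variables (T : Type) (G : group_law T).

Lemma law_mulgV x : gmul G x (ginv G x) = gone G.
Proof.
rewrite -[LHS](gmul1 G) -{1}(gmulV G (ginv G x)) -gmulA (gmulA G (ginv G x) x).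
by rewrite gmulV gmul1 gmulV.
Qed.

Lemma law_mulg1 x : gmul G x (gone G) = x.
Proof. by rewrite -(gmulV G x) gmulA law_mulgV gmul1. Qed.

End GroupLawAxioms.

HB.instance Definition _ (T : choiceType) (G : group_law T) := Choice.on (group_of_law G).
HB.instance Definition _ (T : choiceType) (G : group_law T) :=
  isGroup.Build (group_of_law G)
    (@gmulA T G) (@gmul1 T G) (@law_mulg1 T G) (@gmulV T G) (@law_mulgV T G).

Section ClosedSubgroups.
Variables (T : topologicalType) (G : group_law T).
Local Notation gT := (group_of_law G).
Local Open Scope group_scope.

Lemma gexpE (x : gT) n : gexp G x n = x ^+ n.
Proof. by elim: n => //= n ->; rewrite expgS. Qed.

Lemma gcommE (x y : gT) : gcomm G x y = [~ x, y].
Proof. by change (x^-1 * y^-1 * x * y = [~ x, y]); rewrite /commg /conjg !mulgA. Qed.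

Lemma is_normalP N : is_normal G N <-> @normal_subgroup gT N.
Proof.
have conjE (x g : gT) : gmul G (gmul G (ginv G g) x) g = x ^ g by rewrite /conjg mulgA.
by split=> [] [sN NJ]; split=> // x g; move: (NJ x g); rewrite conjE.
Qed.

Lemma gpow_subE N q : gpow_sub G N q = gen_closed G [set x ^+ q | x in (N : set gT)].
Proof. by congr gen_closed; apply: eq_imagel => x _; apply: gexpE. Qed.

Lemma subgroup_gen_closed S : @subgroup gT (gen_closed G S).
Proof.
split; first by move=> H [H1 _].
split=> [x y Sx Sy|x Sx] H sH cH SH; have [_ [sM sV]] := sH.
  by apply: sM; [apply: Sx | apply: Sy].
by apply: sV; apply: Sx.
Qed.

Lemma closed_gen_closed S : closed (gen_closed G S).
Proof.
have -> : gen_closed G S = \bigcap_(H in [set H | is_subgroup G H /\ closed H /\ S `<=` H]) H.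
  by apply/seteqP; split=> x Sx H; [case=> sH [cH SH] | move=> sH cH SH]; apply: Sx.
by apply: closed_bigI => H [_ []].
Qed.

Lemma sub_gen_closed S : S `<=` gen_closed G S.
Proof. by move=> x Sx H _ _; apply. Qed.

Lemma gen_closed_min S H : @subgroup gT H -> closed H -> S `<=` H -> gen_closed G S `<=` H.
Proof. by move=> sH cH SH x; apply. Qed.

Lemma generated_sub_gen_closed S : @generated gT S `<=` gen_closed G S.
Proof. exact: generated_min (subgroup_gen_closed S) (@sub_gen_closed S). Qed.

Lemma lower_central_sub_lcs l : @lower_central gT l `<=` lcs G l.
Proof.
elim: l => //= l IHl; apply: generated_min (subgroup_gen_closed _) _ => _ [x lx [t _ <-]].
by apply: sub_gen_closed; exists x; [apply: IHl | exists t => //; rewrite gcommE].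
Qed.

Hypothesis tg : topological_group G.

Lemma continuousM (f g : T -> T) :
  continuous f -> continuous g -> continuous (fun t => gmul G (f t) (g t)).
Proof.
move=> cf cg t.
apply: (@continuous_comp _ _ _ (fun t => (f t, g t)) (fun xy : T * T => gmul G xy.1 xy.2)).
  exact: cvg_pair (cf t) (cg t).
exact: tg.1.
Qed.

Let continuous_id : continuous (fun t : T => t).
Proof. by move=> t; apply: cvg_id. Qed.

Let continuous_cst (a : T) : continuous (fun=> a) := @cst_continuous T T a.

Lemma continuous_commg (x : gT) : continuous (fun t : T => [~ x, t] : T).
Proof.
have -> : (fun t : T => [~ x, t] : T) = fun t => gmul G (gmul G (gmul G (ginv G x) (ginv G t)) x) t.
  by apply: funext => t; rewrite -gcommE.
have cVx : continuous (fun t => gmul G (ginv G x) (ginv G t)).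
  exact: continuousM (@continuous_cst _) tg.2.
exact: continuousM (continuousM cVx (@continuous_cst _)) continuous_id.
Qed.

Lemma continuous_conjg (g : gT) : continuous (fun t : T => (t : gT) ^ g : T).
Proof.
have -> : (fun t : T => (t : gT) ^ g : T) = fun t => gmul G (gmul G (ginv G g) t) g.
  by apply: funext => t; rewrite /conjg mulgA.
exact: continuousM (continuousM (@continuous_cst _) continuous_id) (@continuous_cst _).
Qed.

Lemma closed_preimage (f : T -> T) (D : set T) : continuous f -> closed D -> closed (f @^-1` D).
Proof. by move=> cf cD; apply: preimage_closed => // x _; apply: cf. Qed.

Lemma normal_gpow_sub N q : @normal_subgroup gT N -> @normal_subgroup gT (gpow_sub G N q).
Proof.
move=> nN; rewrite gpow_subE; set S := [set y ^+ q | y in N].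
split=> [|x g]; first exact: subgroup_gen_closed.
have SJ : S `<=` [set y | gen_closed G S (y ^ g)].
  move=> _ [y Ny <-]; rewrite /= conjXg; apply: sub_gen_closed.
  by exists (y ^ g) => //; exact: (normalJ nN _ Ny).
have cSg : closed [set y : T | gen_closed G S ((y : gT) ^ g)].
  exact: closed_preimage (continuous_conjg (g := g)) (closed_gen_closed (S := S)).
exact: gen_closed_min (subgroup_conj_preimage g (subgroup_gen_closed S)) cSg SJ x.
Qed.

Lemma gcomm_sub_gpow c k p q N : nil_class G c ->
  (forall j, 0 < j < c -> q %| 'C(p ^ k, j)) -> @normal_subgroup gT N ->
  gcomm_sub G N (gpow_sub G [set: T] (p ^ k)) `<=` gpow_sub G N q.
Proof.
move=> [lcs1 _] qC nN.
set Nq := gpow_sub G N q; have nNq : @normal_subgroup gT Nq := normal_gpow_sub q nN.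
have lc1 : @lower_central gT c `<=` [set 1] by rewrite -lcs1; apply: lower_central_sub_lcs.
pose C : set T := @cent_mod gT Nq N.
have cC : closed C.
  have -> : C = \bigcap_(x in N) ((fun t : T => [~ x, t] : T) @^-1` Nq).
    by apply/seteqP; split=> t Ct x Nx; apply: Ct.
  apply: closed_bigI => x _.
  exact: closed_preimage (continuous_commg (x := x)) (closed_gen_closed (S := _)).
have KC : gpow_sub G [set: T] (p ^ k) `<=` C.
  rewrite gpow_subE; apply: (gen_closed_min (subgroup_cent_mod _ nNq) cC) => _ [g _ <-] y Ny.
  rewrite /Nq gpow_subE; apply: generated_sub_gen_closed; exact (commg_expg_mem_pow nN g lc1 qC Ny).
apply: (gen_closed_min (subgroup_gen_closed _) (closed_gen_closed (S := _))) => _ [x Nx [g Kg <-]].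
by rewrite gcommE; apply: KC _ Kg x Nx.
Qed.

End ClosedSubgroups.

Theorem lemma3p2 (c k p : nat) (T : topologicalType) (G : group_law T) :
  prime p -> pro_p_group G p -> fin_gen G -> nil_class G c ->
  let K := gpow_sub G [set: T] (p ^ k) in
  (odd p -> (1 <= k)%N -> (c.+1 <= p ^ (k - 1))%N ->
     (forall N : set T, is_normal G N -> closed N ->
        gcomm_sub G N K `<=` gpow_sub G N p) /\ powerful G p K) /\
  (p = 2 -> (2 <= k)%N -> (c.+1 <= 2 ^ (k - 2))%N ->
     (forall N : set T, is_normal G N -> closed N ->
        gcomm_sub G N K `<=` gpow_sub G N 4) /\ powerful G p K).
Proof.
move=> pp [tg _] _ nilG K.
have nK : @normal_subgroup (group_of_law G) K := normal_gpow_sub tg (p ^ k) normal_setT.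
have main a : a <= k -> c <= p ^ a -> forall N, @normal_subgroup (group_of_law G) N ->
    gcomm_sub G N K `<=` gpow_sub G N (p ^ (k - a).+1).
  move=> ak cpa N nN; have qC j : 0 < j < c -> p ^ (k - a).+1 %| 'C(p ^ k, j).
    by case/andP=> j0 jc; apply: dvdn_bin_pexp => //; rewrite j0 (leq_trans jc cpa).
  exact (gcomm_sub_gpow tg nilG qC nN).
have p1 := prime_gt1 pp.
split=> [op k1 cpk | p2 k2 cpk].
- have cpk' : c <= p ^ k by apply: leq_trans (ltnW cpk) (leq_pexp2l (ltnW p1) (leq_subr 1 k)).
  have := main k (leqnn k) cpk'; rewrite subnn expn1 => mainp.
  have p_neq2 : (p == 2) = false by apply/eqP => p2; rewrite p2 in op.
  split=> [N /is_normalP nN _|]; first exact: mainp.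
  by rewrite /powerful p_neq2; apply: mainp.
- subst p; have cpk' : c <= 2 ^ (k - 1) by apply: leq_trans (ltnW cpk) (leq_pexp2l _ _); lia.
  have := main (k - 1) (leq_subr 1 k) cpk'; rewrite (_ : (k - (k - 1)).+1 = 2); last by lia.
  move=> main2; split=> [N /is_normalP nN _|]; first exact: main2.
  by rewrite /powerful eqxx; apply: main2.
Qed.
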